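(* Let $\mathcal{R}$ be a ring and $(\mathcal{C}^{\bullet},\partial)$ a bigraded cochain complex of $\mathcal{R}$-modules as in the context. Then there exists a well-defined $\mathcal{R}$-linear map $\rho_{k}:\mathcal{A}^{k}\to H^{k+1}(\mathcal{N}_{0},\overline{\partial})$ given by \[ \rho_{k}(\xi):=[\partial_{2,-1}\xi_{k-1,1}+\partial_{1,0}\eta_{k,0}], \] where $\eta\in\mathcal{C}^{k}$ is any element with $\pi_{1}\eta=\xi$ and $\pi_{1}(\partial\eta)=0$ (the class being independent of this choice). Moreover, $\mathcal{Z}^{k}_{1}=\ker(\rho_{k})$.
   Context: Setting: $\mathcal{C}^{k}=\bigoplus_{p+q=k}\mathcal{C}^{p,q}$ with $\mathcal{C}^{p,q}=\{0\}$ if $p<0$ or $q<0$; $\partial$ is $\mathcal{R}$-linear of degree $1$, $\partial^{2}=0$, $\partial=\partial_{2,-1}+\partial_{1,0}+\partial_{0,1}$ with $\partial_{i,j}(\mathcal{C}^{p,q})\subseteq\mathcal{C}^{p+i,q+j}$. For $\eta\in\mathcal{C}^k$, $\eta_{p,q}$ is its $\mathcal{C}^{p,q}$-component. $G^{q}\mathcal{C}:=\bigoplus_{j\geq q}\mathcal{C}^{i,j}$, $\pi_{q}:\mathcal{C}\to G^{q}\mathcal{C}$ the projection along the bigrading. $\mathcal{N}^{p,q}:=\ker(\partial_{0,1}|_{\mathcal{C}^{p,q}})\cap\ker(\partial_{2,-1}|_{\mathcal{C}^{p,q}})$, $\mathcal{N}_{q}:=\bigoplus_{p}\mathcal{N}^{p-q,q}$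 (degree-$m$ part $\mathcal{N}^{m-q,q}$), a subcomplex with differential $\overline{\partial}:=\partial|_{\mathcal{N}_q}$; in particular $\mathcal{N}_0$ consists of the $\partial_{0,1}$-closed elements of $\mathcal{C}^{\bullet,0}$. $\mathcal{A}^{k}:=\{\pi_{1}(\eta)\mid\eta\in\mathcal{C}^{k},\ \pi_{1}(\partial\eta)=0\}$. $\mathcal{M}^{k}:=\{\eta\in\mathcal{C}^{k}\mid(\partial\eta)_{i,j}\in B^{k+1}(\mathcal{N}_{j},\overline{\partial})\ \forall\, i+j=k+1\}$ and $\mathcal{Z}^{k}_{1}:=\{\pi_{1}(\eta)\mid\eta\in\mathcal{M}^{k},\ \pi_{1}(\partial\eta)=0\}$. *)

From HB Require Import structures.
From mathcomp Require Import all_boot all_order all_algebra.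
Set Implicit Arguments. Unset Strict Implicit. Unset Printing Implicit Defensive.
Import Order.TTheory GRing.Theory Num.Theory.
Local Open Scope ring_scope.

(* A bigraded cochain complex  C = (+)_{p,q >= 0} C^{p,q}  of left R-modules,
   presented as an ambient R-module V together with the family of projections
   P p q : V -> C^{p,q} along the bigrading (internal direct sum), and the three
   pieces  d21 = ∂_{2,-1}, d10 = ∂_{1,0}, d01 = ∂_{0,1}  of ∂. Components with a
   negative index are {0}: this is encoded by p q : nat and by  d21 C^{p,0} = 0. *)
Record bicomplex (R : pzRingType) (V : lmodType R) := BiComplex {
  P : nat -> nat -> {linear V -> V};
  P_orth : forall p q p' q' v,
     P p q (P p' q' v) = if (p == p') && (q == q') then P p' q' v else 0;
  P_fin : forall v, exists n : nat, v = \sum_(p < n) \sum_(q < n) P p q v;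
  d21 : {linear V -> V};
  d10 : {linear V -> V};
  d01 : {linear V -> V};
  d21_hom : forall p q v, d21 (P p q.+1 v) = P p.+2 q (d21 (P p q.+1 v));
  d21_0 : forall p v, d21 (P p 0 v) = 0;
  d10_hom : forall p q v, d10 (P p q v) = P p.+1 q (d10 (P p q v));
  d01_hom : forall p q v, d01 (P p q v) = P p q.+1 (d01 (P p q v));
  dd_0 : forall v, let d := fun w => d21 w + d10 w + d01 w in d (d v) = 0
}.

Section Defs.
Variables (R : pzRingType) (V : lmodType R) (C : bicomplex V).

Definition dtot (v : V) : V := d21 C v + d10 C v + d01 C v.

Definition inC (p q : nat) (v : V) : Prop := P C p q v = v.

Definition inDeg (k : nat) (v : V) : Prop :=
  v = \sum_(i < k.+1) P C i (k - i)%N v.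

(* π_1 restricted to C^k : keeps the components in C^{i,j}, j >= 1, i+j = k *)
Definition pi1 (k : nat) (v : V) : V := \sum_(i < k) P C i (k - i)%N v.

Definition inNpq (p q : nat) (v : V) : Prop :=
  inC p q v /\ d01 C v = 0 /\ d21 C v = 0.

(* degree-m part of N_q, i.e. N^{m-q,q} (which is {0} when m < q) *)
Definition inN (q m : nat) (v : V) : Prop :=
  if (q <= m)%N then inNpq (m - q)%N q v else v = 0.

(* B^{m+1}(N_q, dbar) = dbar (N_q^m) *)
Definition inBN (q m : nat) (v : V) : Prop :=
  exists x, inN q m x /\ v = dtot x.

Definition inZN (q m : nat) (v : V) : Prop := inN q m v /\ dtot v = 0.

Definition inA (k : nat) (xi : V) : Prop :=
  exists eta, inDeg k eta /\ pi1 k.+1 (dtot eta) = 0 /\ pi1 k eta = xi.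

Definition inM (k : nat) (eta : V) : Prop :=
  inDeg k eta /\
  forall j : nat, (j <= k.+1)%N -> inBN j k (P C (k.+1 - j)%N j (dtot eta)).

Definition inZ1 (k : nat) (xi : V) : Prop :=
  exists eta, inM k eta /\ pi1 k.+1 (dtot eta) = 0 /\ pi1 k eta = xi.

Definition rho_rep (k : nat) (eta : V) : V :=
  (if k is k'.+1 then d21 C (P C k' 1 eta) else 0) + d10 C (P C k 0 eta).

(* Cohomology classes modulo B^{k+1}(N_0): cosets  x + B^{k+1}(N_0)  as subsets of V. *)
Definition cls (k : nat) (x : V) : V -> Prop := fun y => inBN 0 k (y - x).
Definition cls0 (k : nat) : V -> Prop := cls k 0.
Definition clsAdd (k : nat) (X Y : V -> Prop) : V -> Prop :=
  fun z => exists x y, X x /\ Y y /\ inBN 0 k (z - (x + y)).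
Definition clsScale (k : nat) (a : R) (X : V -> Prop) : V -> Prop :=
  fun z => exists x, X x /\ inBN 0 k (z - a *: x).

End Defs.

From HB Require Import structures.
From mathcomp Require Import all_boot all_order all_algebra.
From Stdlib Require Import FunctionalExtensionality PropExtensionality.
Import GRing.Theory.
Set Implicit Arguments. Unset Strict Implicit.
Local Open Scope ring_scope.

(* If eta lies in C^k and pi_1 (d eta) = 0, then d eta lies in C^{k+1} with no
   component in rows q >= 1, so it is concentrated in C^{k+1,0}; its component
   there is d21 eta_{k-1,1} + d10 eta_{k,0}.  Hence this representative equals
   d eta: it is d-closed, and being in the bottom row it is d01-closed, i.e. a
   cocycle of N_0.  Two admissible eta with the same pi_1 differ by an
   admissible element of C^{k,0}, which is d01-closed and so lies in N_0; the
   representatives then differ by a coboundary.  Finally, for admissible eta all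
   components of d eta off C^{k+1,0} vanish, so eta is in M^k exactly when the
   representative is a coboundary. *)

Section Bicomplex.
Variables (R : pzRingType) (V : lmodType R) (C : bicomplex V).

Lemma P_proj p q v : inC C p q (P C p q v).
Proof. by rewrite /inC P_orth !eqxx. Qed.

Lemma P_inC p q p' q' w :
  inC C p q w -> P C p' q' w = if (p' == p) && (q' == q) then w else 0.
Proof. by move=> h; rewrite -{1}h P_orth h. Qed.

Lemma d10_inC p q w : inC C p q w -> inC C p.+1 q (d10 C w).
Proof. by move=> h; rewrite /inC -h -d10_hom. Qed.

Lemma d01_inC p q w : inC C p q w -> inC C p q.+1 (d01 C w).
Proof. by move=> h; rewrite /inC -h -d01_hom. Qed.

Lemma d21_inC p q w : inC C p q.+1 w -> inC C p.+2 q (d21 C w).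
Proof. by move=> h; rewrite /inC -h -d21_hom. Qed.

Lemma d21_inC0 p w : inC C p 0 w -> d21 C w = 0.
Proof. by move=> h; rewrite -h d21_0. Qed.

Lemma linear_eq_on_components (f g : {linear V -> V}) :
  (forall p q v, f (P C p q v) = g (P C p q v)) -> f =1 g.
Proof.
move=> fg v; have [n ->] := P_fin C v.
by rewrite !linear_sum; apply: eq_bigr => p _; rewrite !linear_sum; apply: eq_bigr.
Qed.

Lemma P_d10 p q v : P C p.+1 q (d10 C v) = d10 C (P C p q v).
Proof.
apply: (linear_eq_on_components (f := P C p.+1 q \o d10 C) (g := d10 C \o P C p q)).
move=> p' q' w /=; rewrite (P_inC _ _ (d10_inC (P_proj p' q' w))) P_orth eqSS.
by case: ifP; rewrite ?linear0.
Qed.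

Lemma P_d21 p q v : P C p.+2 q (d21 C v) = d21 C (P C p q.+1 v).
Proof.
apply: (linear_eq_on_components (f := P C p.+2 q \o d21 C) (g := d21 C \o P C p q.+1)).
move=> p' [|q'] w /=; first by rewrite P_orth andbF !linear0 d21_0 linear0.
by rewrite (P_inC _ _ (d21_inC (P_proj p' q'.+1 w))) P_orth !eqSS; case: ifP; rewrite ?linear0.
Qed.

Lemma P1_d21 q v : P C 1 q (d21 C v) = 0.
Proof.
apply: (linear_eq_on_components (f := P C 1 q \o d21 C) (g := \0)) => p' [|q'] w /=.
  by rewrite d21_0 linear0.
by rewrite (P_inC _ _ (d21_inC (P_proj p' q'.+1 w))).
Qed.

Lemma P_d01_bottom p v : P C p 0 (d01 C v) = 0.
Proof.
apply: (linear_eq_on_components (f := P C p 0 \o d01 C) (g := \0)) => p' q' w /=.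
by rewrite (P_inC _ _ (d01_inC (P_proj p' q' w))) andbF.
Qed.

Lemma dtot_is_linear : linear (dtot C).
Proof.
move=> a u v; rewrite /dtot !linearP !scalerDr.
by rewrite (addrACA (a *: d21 C u)) (addrACA (a *: d21 C u + a *: d10 C u)).
Qed.
HB.instance Definition _ := GRing.isLinear.Build R V V *:%R (dtot C) dtot_is_linear.

Lemma dtot_dtot v : dtot C (dtot C v) = 0.
Proof. exact: dd_0. Qed.

Lemma sum_linear n (f : 'I_n -> {linear V -> V}) : linear (fun v => \sum_(i < n) f i v).
Proof. by move=> a u v; rewrite scaler_sumr -big_split; apply: eq_bigr => i _; apply: linearP. Qed.

Definition degP k v := \sum_(i < k.+1) P C i (k - i) v.

HB.instance Definition _ k := GRing.isLinear.Build R V V *:%R (degP k)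
  (sum_linear (fun i : 'I_k.+1 => P C i (k - i))).
HB.instance Definition _ k := GRing.isLinear.Build R V V *:%R (pi1 C k)
  (sum_linear (fun i : 'I_k => P C i (k - i))).

Lemma rho_rep_is_linear k : linear (rho_rep C k).
Proof.
case: k => [|k] a u v; rewrite /rho_rep !linearP ?scaler0 ?add0r //.
by rewrite scalerDr addrACA.
Qed.
HB.instance Definition _ k := GRing.isLinear.Build R V V *:%R (rho_rep C k)
  (rho_rep_is_linear k).

Lemma inDeg_degP k v : inDeg C k v <-> degP k v = v.
Proof. by split=> h; symmetry. Qed.

Lemma degP_split k v : degP k v = pi1 C k v + P C k 0 v.
Proof. by rewrite /degP big_ord_recr /= subnn. Qed.

Lemma degP_inC p q m w : inC C p q w -> degP m w = if (p + q)%N == m then w else 0.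
Proof.
move=> h; rewrite /degP; case: eqP => [<- | ne].
  have lt_p : (p < (p + q).+1)%N by rewrite ltnS leq_addr.
  rewrite (bigD1 (Ordinal lt_p)) //= big1 ?addr0; first by rewrite addKn.
  move=> i ne_ip; rewrite (P_inC _ _ h); case: eqP => // eq_ip.
  by case/eqP: ne_ip; apply: val_inj.
apply: big1 => i _; rewrite (P_inC _ _ h); case: eqP => // eq_ip; case: eqP => // eq_q.
by case: ne; rewrite -eq_q -eq_ip subnKC // -ltnS ltn_ord.
Qed.

Lemma degP_dtot_inC p q m w :
  inC C p q w -> degP m (dtot C w) = if (p + q).+1%N == m then dtot C w else 0.
Proof.
move=> h; rewrite /dtot !linearD /= (degP_inC m (d10_inC h)) (degP_inC m (d01_inC h)).
rewrite addSn addnS; case: q h => [|q] h.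
  by rewrite (d21_inC0 h) linear0; case: eqP; rewrite ?addr0.
by rewrite (degP_inC m (d21_inC h)) !addSn addnS; case: eqP; rewrite ?addr0.
Qed.

Lemma degP_dtot k v : degP k.+1 (dtot C v) = dtot C (degP k v).
Proof.
apply: (linear_eq_on_components (f := degP k.+1 \o dtot C) (g := dtot C \o degP k)).
move=> p q w /=; rewrite (degP_dtot_inC _ (P_proj p q w)) (degP_inC _ (P_proj p q w)).
by rewrite eqSS; case: ifP; rewrite ?linear0.
Qed.

Lemma P_dtot_bottom k v : P C k.+1 0 (dtot C v) = rho_rep C k v.
Proof.
rewrite /dtot !linearD P_d01_bottom addr0 P_d10.
by case: k => [|k]; rewrite ?P1_d21 ?P_d21.
Qed.

Lemma rho_rep_inC k v : inC C k.+1 0 (rho_rep C k v).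
Proof. by rewrite -P_dtot_bottom; apply: P_proj. Qed.

Lemma d01_bottom m r : inC C m 0 r -> d01 C r = P C m 1 (dtot C r).
Proof.
move=> h; rewrite /dtot !linearD (d21_inC0 h) linear0 add0r.
by rewrite (P_inC _ _ (d10_inC h)) (P_inC _ _ (d01_inC h)) /= !eqxx andbF add0r.
Qed.

Lemma inN0E m x : inN C 0 m x <-> inC C m 0 x /\ d01 C x = 0.
Proof.
rewrite /inN /inNpq subn0 /=.
by split=> [[? []] | [h ?]] //; do !split=> //; apply: d21_inC0 h.
Qed.

Lemma inBN_0 q m : inBN C q m 0.
Proof.
exists 0; split; last by rewrite linear0.
by rewrite /inN /inNpq /inC; case: ifP; rewrite ?linear0.
Qed.

Lemma inBN0_linear m a u v :
  inBN C 0 m u -> inBN C 0 m v -> inBN C 0 m (a *: u + v).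
Proof.
move=> [x [/inN0E [hx dx] ->]] [y [/inN0E [hy dy] ->]].
exists (a *: x + y); split; last by rewrite linearP.
by apply/inN0E; rewrite /inC !linearP hx hy dx dy scaler0 add0r.
Qed.

Lemma inBN0_add m u v : inBN C 0 m u -> inBN C 0 m v -> inBN C 0 m (u + v).
Proof. by move=> hu hv; rewrite -[u]scale1r; apply: inBN0_linear. Qed.

Lemma inBN0_scale m a u : inBN C 0 m u -> inBN C 0 m (a *: u).
Proof. by move=> hu; rewrite -[_ *: u]addr0; apply: inBN0_linear hu (inBN_0 _ _). Qed.

Lemma cls_refl k x : cls C k x x.
Proof. by rewrite /cls subrr; apply: inBN_0. Qed.

Lemma cls_eq k x y : cls C k x y -> cls C k x = cls C k y.
Proof.
move=> hxy; apply: functional_extensionality => z.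
apply: propositional_extensionality; rewrite /cls; split=> hz.
  have -> : z - y = (z - x) + (-1) *: (y - x) by rewrite scaleN1r opprB addrA subrK.
  exact/inBN0_add/inBN0_scale.
have -> : z - x = (z - y) + (y - x) by rewrite addrA subrK.
exact: inBN0_add.
Qed.

Lemma cls0E k x : cls C k x = cls0 C k <-> inBN C 0 k x.
Proof.
split=> [hx | hx]; last by rewrite /cls0 (cls_eq (x := 0) (y := x)) // /cls subr0.
by have := cls_refl k x; rewrite hx /cls0 /cls subr0.
Qed.

Lemma clsScaleE k a x : clsScale C k a (cls C k x) = cls C k (a *: x).
Proof.
apply: functional_extensionality => z; apply: propositional_extensionality.
split=> [[y [hxy hz]] | hz]; last by exists x; split; [apply: cls_refl |].
by rewrite (cls_eq (y := a *: y)) // /cls -scalerBr; apply: inBN0_scale.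
Qed.

Lemma clsAddE k x y : clsAdd C k (cls C k x) (cls C k y) = cls C k (x + y).
Proof.
apply: functional_extensionality => z; apply: propositional_extensionality.
split=> [[x' [y' [hx [hy hz]]]] | hz]; last by exists x, y; do !split=> //; apply: cls_refl.
by rewrite (cls_eq (y := x' + y')) // /cls opprD addrACA; apply: inBN0_add.
Qed.

Definition admissible k eta := degP k eta = eta /\ pi1 C k.+1 (dtot C eta) = 0.

Lemma admissible_linear k a eta eta' :
  admissible k eta -> admissible k eta' -> admissible k (a *: eta + eta').
Proof.
move=> [deg_eta pi_eta] [deg_eta' pi_eta'].
by split; rewrite !linearP /= ?deg_eta ?deg_eta' // pi_eta pi_eta' scaler0 addr0.
Qed.

Lemma dtot_admissible k eta : admissible k eta -> dtot C eta = rho_rep C k eta.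
Proof.
move=> [deg_eta pi_eta].
by rewrite -{1}deg_eta -degP_dtot degP_split pi_eta add0r P_dtot_bottom.
Qed.

Lemma rho_rep_cocycle k eta : admissible k eta -> inZN C 0 k.+1 (rho_rep C k eta).
Proof.
move=> adm; have bottom := rho_rep_inC k eta; rewrite -(dtot_admissible adm) in bottom *.
split; last exact: dtot_dtot.
by apply/inN0E; rewrite (d01_bottom bottom) dtot_dtot linear0.
Qed.

Lemma admissible_pi1_eq0_inN0 k eta : admissible k eta -> pi1 C k eta = 0 -> inN C 0 k eta.
Proof.
move=> adm pi_eta; have bottom : inC C k 0 eta.
  by rewrite /inC -{2}adm.1 degP_split pi_eta add0r.
apply/inN0E; split=> //.
by rewrite (d01_bottom bottom) (dtot_admissible adm) (P_inC _ _ (rho_rep_inC k eta)) /= andbF.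
Qed.

Lemma rho_rep_wd k eta eta' : admissible k eta -> admissible k eta' ->
  pi1 C k eta = pi1 C k eta' -> cls C k (rho_rep C k eta) (rho_rep C k eta').
Proof.
move=> adm adm' pi_eq; have := admissible_linear (-1) adm adm'.
rewrite scaleN1r addrC => adm_sub.
exists (eta' - eta); split; last by rewrite (dtot_admissible adm_sub) linearB.
by apply: admissible_pi1_eq0_inN0 adm_sub _; rewrite linearB /= pi_eq subrr.
Qed.

(* Outside A^k this is the empty predicate; on A^k it is one coset, by rho_rep_wd. *)
Definition rho k xi : V -> Prop := fun y =>
  exists2 eta, admissible k eta /\ pi1 C k eta = xi & cls C k (rho_rep C k eta) y.

Lemma rhoE k eta : admissible k eta -> rho k (pi1 C k eta) = cls C k (rho_rep C k eta).
Proof.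
move=> adm; apply: functional_extensionality => y; apply: propositional_extensionality.
split=> [[eta' [adm' pi_eq] hy] | hy]; last by exists eta.
by rewrite (cls_eq (rho_rep_wd adm adm' (esym pi_eq))).
Qed.

Lemma inAP k xi : inA C k xi <-> exists2 eta, admissible k eta & pi1 C k eta = xi.
Proof.
split=> [[eta [/inDeg_degP deg_eta [pi_eta <-]]] | [eta [deg_eta pi_eta] <-]].
  by exists eta.
by exists eta; split; [apply/inDeg_degP | split].
Qed.

Lemma rho_linear k a xi xi' : inA C k xi -> inA C k xi' ->
  rho k (a *: xi + xi') = clsAdd C k (clsScale C k a (rho k xi)) (rho k xi').
Proof.
move=> /inAP [eta adm <-] /inAP [eta' adm' <-].
rewrite -linearP (rhoE (admissible_linear a adm adm')) (rhoE adm) (rhoE adm').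
by rewrite clsScaleE clsAddE linearP.
Qed.

Lemma admissible_inM k eta :
  admissible k eta -> (inM C k eta <-> inBN C 0 k (rho_rep C k eta)).
Proof.
move=> adm; rewrite /inM (dtot_admissible adm); split.
  by case=> _ /(_ 0%N isT); rewrite subn0 rho_rep_inC.
move=> hB; split; first exact/inDeg_degP/adm.1.
case=> [|j] _; first by rewrite subn0 rho_rep_inC.
by rewrite (P_inC _ _ (rho_rep_inC k eta)) andbF; apply: inBN_0.
Qed.

Lemma inZ1_ker k xi : inZ1 C k xi <-> inA C k xi /\ rho k xi = cls0 C k.
Proof.
split=> [[eta [inM_eta [pi_eta <-]]] | [/inAP [eta adm <-]]].
  have adm : admissible k eta by split; [apply/inDeg_degP; case: inM_eta |].
  split; first by apply/inAP; exists eta.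
  by rewrite rhoE // cls0E -admissible_inM.
rewrite rhoE // cls0E -admissible_inM // => inM_eta.
by exists eta; split=> //; split=> //; case: adm.
Qed.

End Bicomplex.

Theorem lemma5p2 (R : pzRingType) (V : lmodType R) (C : bicomplex V) (k : nat) :
  exists rho : V -> (V -> Prop),
    (* well-defined: for ANY admissible eta, rho (pi1 eta) is the class of the
       cocycle  ∂_{2,-1} η_{k-1,1} + ∂_{1,0} η_{k,0}  in H^{k+1}(N_0) *)
    (forall eta : V, inDeg C k eta -> pi1 C k.+1 (dtot C eta) = 0 ->
        inZN C 0 k.+1 (rho_rep C k eta) /\
        rho (pi1 C k eta) = cls C k (rho_rep C k eta)) /\
    (* R-linear on A^k *)
    (forall (a : R) (xi xi' : V), inA C k xi -> inA C k xi' ->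
        rho (a *: xi + xi') = clsAdd C k (clsScale C k a (rho xi)) (rho xi')) /\
    (* Z^k_1 = ker rho_k *)
    (forall xi : V, inZ1 C k xi <-> (inA C k xi /\ rho xi = cls0 C k)).
Proof.
exists (rho C k); split; [|split].
- move=> eta /inDeg_degP deg_eta pi_eta; have adm : admissible C k eta by [].
  by split; [apply: rho_rep_cocycle | apply: rhoE].
- exact: rho_linear.
- exact: inZ1_ker.
Qed.
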